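(* Let $(X,d)$ be a metric space, $a\in X$, and let $\tilde x$ be a sequence of points of $X$ that is $d$-statistically convergent to $a$. Suppose $\tilde x'=(x_{n(k)})$ is a subsequence of $\tilde x$ for which there exist a sequence $\tilde y$ of points of $X$ and a subsequence $\tilde y'$ of $\tilde y$ such that $\tilde y$ and $\tilde x$ are statistically equivalent, $K_{\tilde x'}=K_{\tilde y'}$, and $\tilde y'$ is not $d$-statistically convergent. Then $\liminf_{n\to\infty}\frac{|K_{\tilde x'}(n)|}{n}=0$.
   Context: For a subsequence $\tilde z'=(z_{n(k)})$ of a sequence $(z_n)$ (with $(n(k))$ infinite and strictly increasing), $K_{\tilde z'}=\{n(k):k\in\mathbb N\}$ and $K_{\tilde z'}(n)=\{m\in K_{\tilde z'}:m\le n\}$. A sequence $(z_k)$ is $d$-statistically convergent to $a$ if $\lim_{n\to\infty}\frac1n|\{k\le n: d(z_k,a)\ge\epsilon\}|=0$ for all $\epsilon>0$, and $d$-statistically convergent if this holds for some $a\in X$; subsequences are regarded as sequences indexed by $k$. A set $M\subseteq\mathbb N$ is statistical dense if $\lim_{n\to\infty}|\{m\in M:m\le n\}|/n=1$; sequences $(x_n),(y_n)$ are statistically equivalent if $x_n=y_n$ for all $n$ in some statistical dense $M$. *)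

From Stdlib Require Import Reals ClassicalDescription.
From Coquelicot Require Import Coquelicot.
Open Scope R_scope.

Definition is_metric {X : Type} (d : X -> X -> R) : Prop :=
  (forall x y, 0 <= d x y) /\
  (forall x y, d x y = 0 <-> x = y) /\
  (forall x y, d x y = d y x) /\
  (forall x y z, d x z <= d x y + d y z).

Fixpoint count_upto (P : nat -> Prop) (n : nat) : nat :=
  match n with
  | O => O
  | S m => (count_upto P m +
            (if excluded_middle_informative (P m) then 1 else 0))%nat
  end.

Definition freq (P : nat -> Prop) (n : nat) : R :=
  INR (count_upto P n) / INR n.

Definition stat_conv_to {X : Type} (d : X -> X -> R) (z : nat -> X) (a : X) : Prop :=
  forall eps : R, 0 < eps ->
    is_lim_seq (freq (fun k => eps <= d (z k) a)) 0.

Definition stat_conv {X : Type} (d : X -> X -> R) (z : nat -> X) : Prop :=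
  exists a : X, stat_conv_to d z a.

Definition strictly_increasing (n : nat -> nat) : Prop :=
  forall k, (n k < n (S k))%nat.

(* K_{z'} for the subsequence z' = z o nsub *)
Definition Kset (nsub : nat -> nat) : nat -> Prop :=
  fun m => exists k, nsub k = m.

Definition stat_dense (M : nat -> Prop) : Prop :=
  is_lim_seq (freq M) 1.

Definition stat_equiv {X : Type} (x y : nat -> X) : Prop :=
  exists M : nat -> Prop, stat_dense M /\ forall n, M n -> x n = y n.

(* If the lower density of K = K_{x'} were some l > 0, then eventually at least
   (l/2) n of the indices below n lie in K.  Hence the first k terms of y' sit
   among the first n(k) terms of y with k > (l/2) n(k), so the proportion of
   terms of y' at distance >= eps from a is at most 2/l times the corresponding
   proportion for y.  As y is statistically equivalent to x, it is statistically
   convergent to a, and so would be y' — a contradiction. *)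

From Stdlib Require Import Reals Lia Lra Classical ClassicalDescription.
From Coquelicot Require Import Coquelicot.
Open Scope R_scope.

Lemma count_upto_impl (P Q : nat -> Prop) n :
  (forall k, P k -> Q k) -> (count_upto P n <= count_upto Q n)%nat.
Proof.
  intros PQ; induction n as [|n IH]; simpl; [lia|].
  destruct (excluded_middle_informative (P n)) as [p|];
  destruct (excluded_middle_informative (Q n)); try lia.
  exfalso; auto.
Qed.

Lemma count_upto_ext (P Q : nat -> Prop) n :
  (forall k, P k <-> Q k) -> count_upto P n = count_upto Q n.
Proof.
  intros PQ; apply Nat.le_antisymm; apply count_upto_impl; intro k; apply PQ.
Qed.

Lemma count_upto_mono P n n' :
  (n <= n')%nat -> (count_upto P n <= count_upto P n')%nat.
Proof.
  induction 1 as [|n' _ IH]; simpl; [lia|].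
  destruct (excluded_middle_informative (P n')); lia.
Qed.

Lemma count_upto_or P Q n :
  (count_upto (fun k => P k \/ Q k) n <= count_upto P n + count_upto Q n)%nat.
Proof.
  induction n as [|n IH]; simpl; [lia|].
  destruct (excluded_middle_informative (P n \/ Q n)) as [[p|q]|npq];
  destruct (excluded_middle_informative (P n));
  destruct (excluded_middle_informative (Q n)); tauto || lia.
Qed.

Lemma count_upto_compl P n :
  (count_upto P n + count_upto (fun k => ~ P k) n = n)%nat.
Proof.
  induction n as [|n IH]; simpl; [lia|].
  destruct (excluded_middle_informative (P n));
  destruct (excluded_middle_informative (~ P n)); tauto || lia.
Qed.

Section StrictlyIncreasing.

Variable f : nat -> nat.
Hypothesis f_incr : strictly_increasing f.

Lemma strictly_increasing_le j m : (j <= m)%nat -> (f j <= f m)%nat.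
Proof. induction 1 as [|m _ IH]; [lia|]. specialize (f_incr m); lia. Qed.

Lemma strictly_increasing_lt_inv j m : (f j < f m)%nat -> (j < m)%nat.
Proof.
  intros fjm; destruct (Nat.lt_ge_cases j m) as [|mj]; auto.
  pose proof (strictly_increasing_le m j mj); lia.
Qed.

Lemma strictly_increasing_ge_id m : (m <= f m)%nat.
Proof. induction m as [|m IH]; [lia|]. specialize (f_incr m); lia. Qed.

Lemma count_upto_subseq (P : nat -> Prop) m :
  (count_upto (fun k => P (f k)) m <= count_upto P (f m))%nat.
Proof.
  induction m as [|m IH]; simpl; [lia|].
  pose proof (count_upto_mono P (S (f m)) (f (S m)) (f_incr m)) as mono.
  simpl in mono; destruct (excluded_middle_informative (P (f m))); lia.
Qed.

Lemma count_upto_Kset_le n m :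
  (n <= f m)%nat -> (count_upto (Kset f) n <= m)%nat.
Proof.
  revert m; induction n as [|n IH]; intros m nm; simpl; [lia|].
  destruct (excluded_middle_informative (Kset f n)) as [[j <-]|_].
  - assert (jm : (j < m)%nat) by (apply strictly_increasing_lt_inv; lia).
    destruct m as [|m]; [lia|].
    enough (count_upto (Kset f) (f j) <= m)%nat by lia.
    apply IH, strictly_increasing_le; lia.
  - enough (count_upto (Kset f) n <= m)%nat by lia.
    apply IH; lia.
Qed.

End StrictlyIncreasing.

Lemma freq_ge0 P n : 0 <= freq P n.
Proof.
  unfold freq; destruct n as [|n].
  - simpl; unfold Rdiv; rewrite Rmult_0_l; lra.
  - apply Rdiv_le_0_compat; [apply pos_INR | apply lt_0_INR; lia].
Qed.

Lemma INR_div_le a b n : (a <= b)%nat -> INR a / INR n <= INR b / INR n.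
Proof.
  intros ab; unfold Rdiv; apply Rmult_le_compat_r; [|now apply le_INR].
  destruct n as [|n]; [simpl; rewrite Rinv_0; lra|].
  apply Rlt_le, Rinv_0_lt_compat, lt_0_INR; lia.
Qed.

Lemma freq_le_sum (P Q R : nat -> Prop) n :
  (count_upto P n <= count_upto Q n + count_upto R n)%nat ->
  freq P n <= freq Q n + freq R n.
Proof.
  intros le_count; unfold freq; rewrite <- Rdiv_plus_distr, <- plus_INR.
  now apply INR_div_le.
Qed.

Lemma freq_ext (P Q : nat -> Prop) n :
  (forall k, P k <-> Q k) -> freq P n = freq Q n.
Proof. intros PQ; unfold freq; now rewrite (count_upto_ext P Q n PQ). Qed.

Lemma freq_compl P n : (0 < n)%nat -> freq (fun k => ~ P k) n = 1 - freq P n.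
Proof.
  intros n_pos; unfold freq.
  pose proof (f_equal INR (count_upto_compl P n)) as compl.
  rewrite plus_INR in compl.
  assert (0 < INR n) by (apply lt_0_INR; lia).
  replace (INR (count_upto (fun k => ~ P k) n))
    with (INR n - INR (count_upto P n)) by lra.
  field; lra.
Qed.

Lemma is_lim_seq_freq_compl P :
  is_lim_seq (freq P) 1 -> is_lim_seq (freq (fun k => ~ P k)) 0.
Proof.
  intros dense.
  apply is_lim_seq_ext_loc with (u := fun n => 1 - freq P n).
  - exists 1%nat; intros n n_pos; symmetry; apply freq_compl; lia.
  - replace 0 with (1 - 1) by ring.
    apply is_lim_seq_minus'; [apply is_lim_seq_const | exact dense].
Qed.

Lemma is_lim_seq_freq_impl (P Q : nat -> Prop) :
  (forall k, P k -> Q k) -> is_lim_seq (freq Q) 0 -> is_lim_seq (freq P) 0.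
Proof.
  intros PQ nullQ.
  apply is_lim_seq_le_le with (u := fun _ => 0) (w := freq Q);
    [|apply is_lim_seq_const | exact nullQ].
  intros n; split; [apply freq_ge0|].
  now apply INR_div_le, count_upto_impl.
Qed.

Lemma is_lim_seq_freq_or (P Q : nat -> Prop) :
  is_lim_seq (freq P) 0 -> is_lim_seq (freq Q) 0 ->
  is_lim_seq (freq (fun k => P k \/ Q k)) 0.
Proof.
  intros nullP nullQ.
  apply is_lim_seq_le_le with (u := fun _ => 0) (w := fun n => freq P n + freq Q n).
  - intros n; split; [apply freq_ge0 | apply freq_le_sum, count_upto_or].
  - apply is_lim_seq_const.
  - replace (Finite 0) with (Rbar_plus 0 0) by (simpl; f_equal; ring).
    now apply is_lim_seq_plus'.
Qed.

Lemma stat_conv_to_equiv {X : Type} (d : X -> X -> R) (x y : nat -> X) (a : X) :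
  stat_equiv y x -> stat_conv_to d x a -> stat_conv_to d y a.
Proof.
  intros [M [dense yx]] conv_x eps eps_pos.
  apply is_lim_seq_freq_impl with (Q := fun k => ~ M k \/ eps <= d (x k) a).
  - intros k far; destruct (classic (M k)) as [Mk|]; [right | now left].
    now rewrite <- (yx k Mk).
  - apply is_lim_seq_freq_or; [now apply is_lim_seq_freq_compl | now apply conv_x].
Qed.

Lemma LimInf_freq_neq0_lower_bound P :
  LimInf_seq (freq P) <> Finite 0 ->
  exists delta, 0 < delta /\ eventually (fun n => delta < freq P n).
Proof.
  intros neq0.
  destruct (ex_LimInf_seq (freq P)) as [l liminf].
  rewrite (is_LimInf_seq_unique _ _ liminf) in neq0.
  destruct l as [l| |]; simpl in liminf.
  - destruct (Rtotal_order l 0) as [l_neg|[l0|l_pos]].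
    + exfalso; assert (eps_pos : 0 < - l) by lra.
      destruct (liminf (mkposreal _ eps_pos)) as [often _].
      destruct (often O) as [n [_ small]]; simpl in small.
      pose proof (freq_ge0 P n); lra.
    + now subst l.
    + assert (half_pos : 0 < l / 2) by lra.
      exists (l / 2); split; [exact half_pos|].
      destruct (liminf (mkposreal _ half_pos)) as [_ [N above]].
      exists N; intros n Nn; specialize (above n Nn); simpl in above; lra.
  - exists 1; split; [lra | apply liminf].
  - exfalso; destruct (liminf 0 O) as [n [_ neg]].
    pose proof (freq_ge0 P n); lra.
Qed.

Lemma freq_subseq_le (P : nat -> Prop) f delta m :
  strictly_increasing f -> 0 < delta -> delta < freq (Kset f) (f m) ->
  freq (fun k => P (f k)) m <= freq P (f m) / delta.
Proof.
  intros f_incr delta_pos dense.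
  pose proof (le_INR _ _ (count_upto_subseq f f_incr P m)) as sub_le.
  pose proof (le_INR _ _ (count_upto_Kset_le f f_incr (f m) m (le_n _))) as K_le.
  unfold freq in *.
  set (c := INR (count_upto (fun k => P (f k)) m)) in *.
  set (cP := INR (count_upto P (f m))) in *.
  set (cK := INR (count_upto (Kset f) (f m))) in *.
  assert (fm_pos : 0 < INR (f m)).
  { destruct (Rle_lt_or_eq_dec 0 (INR (f m)) (pos_INR _)) as [|fm0]; [easy|].
    rewrite <- fm0 in dense; unfold Rdiv in dense; rewrite Rinv_0 in dense; lra. }
  (* the indices of K below f m are among f 0, ..., f (m - 1) *)
  assert (m_large : delta * INR (f m) < INR m).
  { apply (Rmult_lt_compat_r (INR (f m))) in dense; [|exact fm_pos].
    unfold Rdiv in dense; rewrite Rmult_assoc, Rinv_l, Rmult_1_r in dense; lra. }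
  assert (m_pos : 0 < INR m) by nra.
  replace (cP / INR (f m) / delta) with (cP / (delta * INR (f m))) by (field; lra).
  apply Rle_trans with (cP / INR m).
  - unfold Rdiv; apply Rmult_le_compat_r; [|exact sub_le].
    now apply Rlt_le, Rinv_0_lt_compat.
  - unfold Rdiv; apply Rmult_le_compat_l; [apply pos_INR|].
    apply Rlt_le, Rinv_lt_contravar; [|exact m_large].
    apply Rmult_lt_0_compat; [apply Rmult_lt_0_compat|]; lra.
Qed.

Lemma is_lim_seq_freq_subseq (P : nat -> Prop) f delta :
  strictly_increasing f -> 0 < delta ->
  eventually (fun n => delta < freq (Kset f) n) ->
  is_lim_seq (freq P) 0 -> is_lim_seq (freq (fun k => P (f k))) 0.
Proof.
  intros f_incr delta_pos [N dense] nullP.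
  apply is_lim_seq_le_le_loc with
    (u := fun _ => 0) (w := fun m => freq P (f m) * / delta).
  - exists N; intros m Nm; split; [apply freq_ge0|].
    apply freq_subseq_le; [exact f_incr | exact delta_pos|].
    apply dense; pose proof (strictly_increasing_ge_id f f_incr m); lia.
  - apply is_lim_seq_const.
  - replace (Finite 0) with (Rbar_mult 0 (/ delta)) by (simpl; f_equal; ring).
    apply is_lim_seq_scal_r, (is_lim_seq_subseq (freq P) 0 f); [|exact nullP].
    intros Q [N0 HN0]; exists N0; intros n n_ge.
    apply HN0; pose proof (strictly_increasing_ge_id f f_incr n); lia.
Qed.

Theorem theorem8 (X : Type) (d : X -> X -> R) (hd : is_metric d)
  (a : X) (x : nat -> X) (hx : stat_conv_to d x a)
  (nx : nat -> nat) (hnx : strictly_increasing nx)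
  (y : nat -> X) (ny : nat -> nat) (hny : strictly_increasing ny)
  (heq : stat_equiv y x)
  (hK : forall m, Kset nx m <-> Kset ny m)
  (hny' : ~ stat_conv d (fun k => y (ny k))) :
  LimInf_seq (freq (Kset nx)) = Finite 0.
Proof.
  apply NNPP; intros liminf_neq0.
  destruct (LimInf_freq_neq0_lower_bound _ liminf_neq0)
    as [delta [delta_pos [N dense_nx]]].
  assert (dense_ny : eventually (fun n => delta < freq (Kset ny) n)).
  { exists N; intros n Nn; rewrite <- (freq_ext _ _ n hK); auto. }
  apply hny'; exists a; intros eps eps_pos.
  apply (is_lim_seq_freq_subseq (fun j => eps <= d (y j) a) ny delta);
    [exact hny | exact delta_pos | exact dense_ny|].
  exact (stat_conv_to_equiv d x y a heq hx eps eps_pos).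
Qed.
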